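(* Let $n\ge 2$ and $m\ge 1$ be integers and let $X$ be an $n\times m$ Latin hypercube design. Then $$d_1(X)\le \left\lfloor \frac{(n+1)m}{3}\right\rfloor,\qquad d_2(X)\le \sqrt{\left\lfloor \frac{n(n+1)m}{6}\right\rfloor }.$$
   Context: An $n\times m$ Latin hypercube design (LHD) is an $n\times m$ matrix each of whose columns is a permutation of $\{1,\ldots,n\}$. For rows $x_i=(x_{i1},\dots,x_{im})$ and $x_j$ and a positive integer $q$, $d_q(x_i,x_j)=\{\sum_{k=1}^m|x_{ik}-x_{jk}|^q\}^{1/q}$, and $d_q(X)=\min\{d_q(x_i,x_j):1\le i<j\le n\}$. *)

From mathcomp Require Import all_boot all_order all_algebra.
From mathcomp Require Import all_classical all_reals.
From mathcomp Require Import exp.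
Set Implicit Arguments. Unset Strict Implicit. Unset Printing Implicit Defensive.
Import Order.TTheory GRing.Theory Num.Theory.
Local Open Scope ring_scope.

Definition is_LHD (n m : nat) (X : 'M[nat]_(n, m)) : Prop :=
  forall k : 'I_m,
    perm_eq [seq X i k | i <- enum 'I_n] (iota 1 n).

Definition dq_rows (R : realType) (q : nat) (n m : nat) (X : 'M[nat]_(n, m))
  (i j : 'I_n) : R :=
  powR (\sum_(k < m) (`|(X i k)%:R - (X j k)%:R| : R) ^+ q) (q%:R^-1).

(* The bigop seed is the
   maximum of d_q over all pairs of rows, which is >= every term, so for
   n >= 2 (nonempty index set) this is exactly the minimum. *)
Definition dq (R : realType) (q : nat) (n m : nat) (X : 'M[nat]_(n, m)) : R :=
  \big[Order.min/ \big[Order.max/0]_(i < n) \big[Order.max/0]_(j < n)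
        dq_rows R q X i j]_(p : 'I_n * 'I_n | (p.1 < p.2)%N)
     dq_rows R q X p.1 p.2.

From mathcomp Require Import all_boot all_order all_algebra.
From mathcomp Require Import all_classical all_reals.
From mathcomp Require Import exp.
From mathcomp Require Import zify.
Import Order.TTheory GRing.Theory Num.Theory.
Local Open Scope ring_scope.

(* Sum the q-th powers of the row distances over all ordered pairs of rows.
   Since every column is a permutation of 1..n, each column contributes the
   same amount T_q(n) = \sum_(1 <= a, b <= n) |a - b|^q, and
   3 T_1(n) = (n-1) n (n+1), 6 T_2(n) = (n-1) n^2 (n+1).  The closest pair of
   distinct rows is at most the mean over the n (n-1) pairs, m T_q(n) / (n (n-1)),
   which is m (n+1) / 3 for q = 1 and m n (n+1) / 6 for q = 2. *)

Lemma exists_offdiag_le_mean {T : finType} (F : T -> T -> nat) (i0 j0 : T) :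
  i0 != j0 ->
  exists2 p : T * T, p.1 != p.2 &
    (#|T| * #|T|.-1 * F p.1 p.2 <= \sum_i \sum_j F i j)%N.
Proof.
move=> i0j0.
case: (@arg_minnP _ (i0, j0) (fun p => p.1 != p.2) (fun p => F p.1 p.2) i0j0).
move=> [i j] /= ij Fmin; exists (i, j) => //=.
rewrite -mulnA -sum_nat_const; apply: leq_sum => k _.
rewrite (bigD1 k) //= -(cardC1 k) -sum_nat_const; apply: leq_trans (leq_addl _ _).
by apply: leq_sum => l lk; apply: (Fmin (k, l)); rewrite /= eq_sym.
Qed.

Lemma big_perm_map {I : finType} (G : nat -> nat) (f : I -> nat) (s : seq nat) :
  perm_eq [seq f i | i <- enum I] s ->
  (\sum_i G (f i) = \sum_(a <- s) G a)%N.
Proof. by move=> fs; rewrite -(perm_big _ fs) big_map big_enum. Qed.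

Lemma normr_natB (R : numDomainType) (a b : nat) :
  (`|a%:R - b%:R| : R) = (`|a - b|%N)%:R.
Proof. by rewrite !pmulrn -intrB -intr_norm -abszE -pmulrn. Qed.

Definition dist_pow_sum (e n : nat) : nat :=
  \sum_(1 <= a < n.+1) \sum_(1 <= b < n.+1) `|a - b| ^ e.

Definition row_dist_pow (e : nat) {n m} (X : 'M[nat]_(n, m)) (i j : 'I_n) : nat :=
  \sum_(k < m) `|X i k - X j k| ^ e.

Lemma gauss_sum n : (2 * \sum_(1 <= i < n.+1) i = n * n.+1)%N.
Proof.
elim: n => [|n IH]; first by rewrite big_geq.
by rewrite big_nat_recr //= mulnDr IH; lia.
Qed.

Lemma sum_squares n : (6 * \sum_(1 <= i < n.+1) i ^ 2 = n * n.+1 * (2 * n + 1))%N.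
Proof.
elim: n => [|n IH]; first by rewrite big_geq.
by rewrite big_nat_recr //= mulnDr IH; lia.
Qed.

Lemma sum_dist_pow_last e n :
  (\sum_(1 <= a < n.+1) `|n.+1 - a| ^ e = \sum_(1 <= i < n.+1) i ^ e)%N.
Proof.
rewrite big_nat_rev /=; apply: eq_big_nat => i /andP [i_gt0 i_le].
rewrite distnEl; last by lia.
by have -> : (n.+1 - (1 + n.+1 - i.+1) = i)%N by lia.
Qed.

Lemma dist_pow_sumS e n : (0 < e)%N ->
  dist_pow_sum e n.+1 = (dist_pow_sum e n + 2 * \sum_(1 <= i < n.+1) i ^ e)%N.
Proof.
move=> e_gt0; rewrite /dist_pow_sum big_nat_recr //= (big_nat_recr n.+1) //=.
under eq_big_nat => a _ do rewrite big_nat_recr //=.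
rewrite big_split /= distnn exp0n // addn0.
under [X in (_ + X + _)%N]eq_bigr => a _ do rewrite distnC.
by rewrite !sum_dist_pow_last; lia.
Qed.

Lemma dist_pow_sum1 n : (3 * dist_pow_sum 1 n = n.-1 * n * n.+1)%N.
Proof.
elim: n => [|n IH]; first by rewrite /dist_pow_sum big_geq.
rewrite dist_pow_sumS //; under eq_bigr do rewrite expn1.
by have := gauss_sum n; case: n IH => [|n] /=; nia.
Qed.

Lemma dist_pow_sum2 n : (6 * dist_pow_sum 2 n = n.-1 * n * n.+1 * n)%N.
Proof.
elim: n => [|n IH]; first by rewrite /dist_pow_sum big_geq.
rewrite dist_pow_sumS //.
by have := sum_squares n; case: n IH => [|n] /=; nia.
Qed.

Lemma sum_row_dist_pow e {n m} (X : 'M[nat]_(n, m)) : is_LHD X ->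
  (\sum_i \sum_j row_dist_pow e X i j = m * dist_pow_sum e n)%N.
Proof.
move=> lhdX; rewrite /row_dist_pow.
under eq_bigr do rewrite exchange_big /=.
rewrite exchange_big /= -[m in RHS]card_ord -sum_nat_const.
apply: eq_bigr => k _.
rewrite (big_perm_map (fun a => \sum_j `|a - X j k| ^ e)%N _ _ (lhdX k)).
rewrite /dist_pow_sum /index_iota subn1.
by apply: eq_bigr => a _; rewrite (big_perm_map (fun b => `|a - b| ^ e)%N _ _ (lhdX k)).
Qed.

Lemma LHD_close_rows e {n m} (X : 'M[nat]_(n, m)) : (1 < n)%N -> is_LHD X ->
  exists2 p : 'I_n * 'I_n, p.1 != p.2 &
    (n * n.-1 * row_dist_pow e X p.1 p.2 <= m * dist_pow_sum e n)%N.
Proof.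
move=> n_gt1 lhdX.
have [//|p p12 le_mean] := exists_offdiag_le_mean (row_dist_pow e X)
  (Ordinal (ltnW n_gt1)) (Ordinal n_gt1).
by exists p; rewrite // -(sum_row_dist_pow e X lhdX) -{1 2}[n]card_ord.
Qed.

Lemma LHD_close_rows1 {n m} (X : 'M[nat]_(n, m)) : (1 < n)%N -> is_LHD X ->
  exists2 p : 'I_n * 'I_n, p.1 != p.2 &
    (row_dist_pow 1 X p.1 p.2 <= (n + 1) * m %/ 3)%N.
Proof.
move=> n_gt1 lhdX; have [p p12 le_mean] := LHD_close_rows 1 X n_gt1 lhdX.
exists p => //; rewrite leq_divRL //.
have nn1_gt0 : (0 < n * n.-1)%N by rewrite muln_gt0; lia.
rewrite -(leq_pmul2l nn1_gt0).
have le3 : (3 * (n * n.-1 * row_dist_pow 1 X p.1 p.2) <= m * (n.-1 * n * n.+1))%N.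
  by rewrite -dist_pow_sum1 [(m * _)%N]mulnCA leq_pmul2l.
nia.
Qed.

Lemma LHD_close_rows2 {n m} (X : 'M[nat]_(n, m)) : (1 < n)%N -> is_LHD X ->
  exists2 p : 'I_n * 'I_n, p.1 != p.2 &
    (row_dist_pow 2 X p.1 p.2 <= n * (n + 1) * m %/ 6)%N.
Proof.
move=> n_gt1 lhdX; have [p p12 le_mean] := LHD_close_rows 2 X n_gt1 lhdX.
exists p => //; rewrite leq_divRL //.
have nn1_gt0 : (0 < n * n.-1)%N by rewrite muln_gt0; lia.
rewrite -(leq_pmul2l nn1_gt0).
have le6 : (6 * (n * n.-1 * row_dist_pow 2 X p.1 p.2) <= m * (n.-1 * n * n.+1 * n))%N.
  by rewrite -dist_pow_sum2 [(m * _)%N]mulnCA leq_pmul2l.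
nia.
Qed.

Lemma dq_rowsC (R : realType) q {n m} (X : 'M[nat]_(n, m)) i j :
  dq_rows R q X i j = dq_rows R q X j i.
Proof. by rewrite /dq_rows; congr powR; apply: eq_bigr => k _; rewrite distrC. Qed.

Lemma dq_le_dq_rows (R : realType) q {n m} (X : 'M[nat]_(n, m)) {i j : 'I_n} :
  i != j -> dq R q X <= dq_rows R q X i j.
Proof.
have le_pair (a b : 'I_n) : (a < b)%N -> dq R q X <= dq_rows R q X a b.
  by move=> ab; exact: (bigmin_le_cond _ (fun p => dq_rows R q X p.1 p.2) (j := (a, b))).
move=> ij; case: (ltngtP i j) => [/le_pair //|/le_pair|/val_inj eq_ij].
- by rewrite dq_rowsC.
- by rewrite eq_ij eqxx in ij.
Qed.

Lemma dq_rowsE (R : realType) q {n m} (X : 'M[nat]_(n, m)) i j :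
  dq_rows R q X i j = powR (row_dist_pow q X i j)%:R q%:R^-1.
Proof.
rewrite /dq_rows /row_dist_pow natr_sum; congr powR.
by apply: eq_bigr => k _; rewrite normr_natB natrX.
Qed.

Theorem lemma1 (R : realType) (n m : nat) (X : 'M[nat]_(n, m)) :
  (2 <= n)%N -> (1 <= m)%N -> is_LHD X ->
  dq R 1 X <= ((((n + 1) * m) %/ 3)%N)%:R /\
  dq R 2 X <= Num.sqrt ((((n * (n + 1) * m) %/ 6)%N)%:R).
Proof.
move=> n_gt1 _ lhdX; split.
- have [[i j] /= ij le_d1] := LHD_close_rows1 X n_gt1 lhdX.
  apply: le_trans (dq_le_dq_rows R 1 X ij) _.
  by rewrite dq_rowsE invr1 powRr1 ?ler0n // ler_nat.
- have [[i j] /= ij le_d2] := LHD_close_rows2 X n_gt1 lhdX.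
  apply: le_trans (dq_le_dq_rows R 2 X ij) _.
  by rewrite dq_rowsE powR12_sqrt ?ler0n // ler_sqrt ?ler0n // ler_nat.
Qed.
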